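(* Let $G$ and $A$ be finite groups with $A$ acting on $G$ by automorphisms, and let $B\leq A$ (acting on $G$ by restriction). (i) If $\Gamma(G,B)$ is connected of diameter $d$, then $\Gamma(G,A)$ is connected of diameter at most $d$. (ii) If $\Gamma(G,B)$ has $m$ connected components, then $\Gamma(G,A)$ has at most $m$ connected components.
   Context: For a finite group $A$ acting by automorphisms on a finite group $G$, the commuting graph of $A$-orbits $\Gamma(G,A)$ is the simple graph whose vertex set is the set $\{x^{A}: x\in G\setminus\{1\}\}$ of $A$-orbits on $G\setminus\{1\}$, two distinct vertices $\mathcal{O},\mathcal{O}'$ being adjacent if and only if there exist $x\in\mathcal{O}$ and $y\in\mathcal{O}'$ with $xy=yx$. *)

From mathcomp Require Import all_boot all_fingroup.
Set Implicit Arguments. Unset Strict Implicit. Unset Printing Implicit Defensive.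
Local Open Scope group_scope.

Section Graphs.
Variable T : finType.

Definition grel (V : {set T}) (e : rel T) : rel T :=
  [rel x y | [&& x \in V, y \in V & e x y]].

Definition walk (V : {set T}) (e : rel T) (n : nat) (x y : T) : Prop :=
  x \in V /\ exists2 p : seq T, size p = n & path (grel V e) x p /\ last x p = y.

Definition diam_le (V : {set T}) (e : rel T) (d : nat) : Prop :=
  forall x y, x \in V -> y \in V -> exists2 n, n <= d & walk V e n x y.

Definition connected_graph (V : {set T}) (e : rel T) : Prop :=
  forall x y, x \in V -> y \in V -> exists n, walk V e n x y.

Definition has_diameter (V : {set T}) (e : rel T) (d : nat) : Prop :=
  diam_le V e d /\ (forall d', diam_le V e d' -> d <= d').

Definition components (V : {set T}) (e : rel T) : {set {set T}} :=
  [set [set y in V | connect (grel V e) x y] | x in V].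
End Graphs.

(* An action of the group A on G by automorphisms is given by a morphism
   phi : A -> {perm gT} with phi @* A \subset Aut G. *)
Section CommutingGraph.
Variables (gT aT : finGroupType) (A : {group aT}).
Variable phi : {morphism A >-> {perm gT}}.

Definition orbitA (B : {set aT}) (x : gT) : {set gT} :=
  [set (phi a) x | a in B].

Definition orbit_vertices (G : {set gT}) (B : {set aT}) : {set {set gT}} :=
  [set orbitA B x | x in G^#].

Definition commuting_adj : rel {set gT} :=
  [rel O O' : {set gT} | (O != O') &&
     [exists x in O, [exists y in O', x * y == y * x]]].
End CommutingGraph.

From Pilot Require Import Defs.
From mathcomp Require Import all_boot all_fingroup.
Set Implicit Arguments. Unset Strict Implicit. Unset Printing Implicit Defensive.
Local Open Scope group_scope.

(* Sending each B-orbit to the A-orbit containing it maps the vertices of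
   Gamma(G,B) onto those of Gamma(G,A), and adjacent B-orbits to A-orbits that
   are equal or adjacent.  Such a contraction shortens walks and maps
   connected components onto connected components. *)

Lemma diam_le_connected (T : finType) (V : {set T}) (e : rel T) d :
  diam_le V e d -> connected_graph V e.
Proof. by move=> dV x y xV yV; have [n _ w] := dV x y xV yV; exists n. Qed.

Section Contraction.
Variables (T U : finType) (V : {set T}) (W : {set U}).
Variables (e : rel T) (e' : rel U) (f : T -> U).
Hypothesis fV : f @: V = W.
Hypothesis f_edge :
  {in V &, forall x y, e x y -> (f x == f y) || e' (f x) (f y)}.

Lemma contract_vertex x : x \in V -> f x \in W.
Proof. by move=> xV; rewrite -fV imset_f. Qed.

Lemma contract_path x p : x \in V -> path (Defs.grel V e) x p ->
  exists2 q, size q <= size p &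
    path (Defs.grel W e') (f x) q /\ last (f x) q = f (last x p).
Proof.
elim: p x => [|y p IHp] x xV /=; first by exists [::].
case/andP=> /and3P[_ yV exy] py.
have [q le_qp [pq lq]] := IHp y yV py.
have /orP[/eqP fxy | e'fxy] := f_edge xV yV exy.
  by exists q; [apply: leqW | rewrite fxy].
exists (f y :: q) => //=.
by rewrite /Defs.grel /= !contract_vertex ?e'fxy.
Qed.

Lemma contract_walk n x y :
  walk V e n x y -> exists2 m, m <= n & walk W e' m (f x) (f y).
Proof.
case=> xV [p sp [px lp]].
have [q le_qp [qfx lq]] := contract_path xV px.
exists (size q); first by rewrite -sp.
by split; [apply: contract_vertex | exists q; rewrite -?lp].
Qed.

Lemma contract_diam_le d : diam_le V e d -> diam_le W e' d.
Proof.
move=> dV u v; rewrite -{1 2}fV => /imsetP[x xV ->] /imsetP[y yV ->].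
have [n le_nd /contract_walk[m le_mn w]] := dV x y xV yV.
by exists m => //; apply: leq_trans le_nd.
Qed.

Lemma contract_connect x y :
  x \in V -> connect (Defs.grel V e) x y -> connect (Defs.grel W e') (f x) (f y).
Proof.
move=> xV /connectP[p px ->].
by have [q _ [qfx <-]] := contract_path xV px; apply/connectP; exists q.
Qed.

Lemma card_components_contract : #|components W e'| <= #|components V e|.
Proof.
(* [h] needs no representative of [C]: on the component of [x] it is the
   component of [f x]. *)
pose h (C : {set T}) :=
  [set u in W | [exists y in C, connect (Defs.grel W e') (f y) u]].
apply: leq_trans (leq_imset_card h (components V e)).
apply/subset_leq_card/subsetP=> _ /imsetP[u + ->].
rewrite -{1}fV => /imsetP[x xV ->].
apply/imsetP; exists [set y in V | connect (Defs.grel V e) x y].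
  exact: imset_f.
apply/setP=> v; rewrite !inE; apply: andb_id2l => _.
apply/idP/exists_inP=> [fxv | [y]].
  by exists x; rewrite ?inE ?xV ?connect0.
by rewrite inE => /andP[_ /(contract_connect xV)]; apply: connect_trans.
Qed.

End Contraction.

Lemma commuting_adj_subset (gT : finGroupType) (O O' P P' : {set gT}) :
  O \subset P -> O' \subset P' -> commuting_adj O O' ->
  (P == P') || commuting_adj P P'.
Proof.
move=> sOP sOP' /andP[_ /exists_inP[x xO /exists_inP[y yO cxy]]].
rewrite /commuting_adj /=; case: eqP => //= _.
apply/exists_inP; exists x; first exact: subsetP xO.
by apply/exists_inP; exists y; first exact: subsetP yO.
Qed.

Section OrbitContraction.
Variables (gT aT : finGroupType) (G : {group gT}) (A B : {group aT}).
Variable phi : {morphism A >-> {perm gT}}.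
Hypothesis sBA : B \subset A.

Lemma orbitAE (C : {set aT}) x : orbitA phi C x = orbit <<phi>> C x.
Proof. by []. Qed.

Definition coarse_orbit (O : {set gT}) : {set gT} := orbitA phi A (repr O).

Lemma orbitA_subset x : orbitA phi B x \subset orbitA phi A x.
Proof. exact: imsetS. Qed.

Lemma coarse_orbitA x : coarse_orbit (orbitA phi B x) = orbitA phi A x.
Proof.
rewrite /coarse_orbit !orbitAE; apply/orbit_in_eqP; first exact: subxx.
rewrite -orbitAE; apply: subsetP (orbitA_subset x) _ _.
by apply: (mem_repr x); rewrite orbitAE orbit_refl.
Qed.

Lemma coarse_orbit_vertices :
  coarse_orbit @: orbit_vertices phi G B = orbit_vertices phi G A.
Proof. by rewrite -imset_comp; apply: eq_imset => x /=; rewrite coarse_orbitA. Qed.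

Lemma coarse_orbit_adj : {in orbit_vertices phi G B &, forall O O',
  commuting_adj O O' ->
  (coarse_orbit O == coarse_orbit O') || commuting_adj (coarse_orbit O) (coarse_orbit O')}.
Proof.
move=> _ _ /imsetP[x _ ->] /imsetP[y _ ->].
by apply: commuting_adj_subset; rewrite coarse_orbitA orbitA_subset.
Qed.

End OrbitContraction.

Theorem lemma2p1 (gT aT : finGroupType) (G : {group gT}) (A B : {group aT})
    (phi : {morphism A >-> {perm gT}}) :
  phi @* A \subset Aut G ->
  B \subset A ->
  (forall d : nat,
      has_diameter (orbit_vertices phi G B) (@commuting_adj gT) d ->
      connected_graph (orbit_vertices phi G A) (@commuting_adj gT) /\
      diam_le (orbit_vertices phi G A) (@commuting_adj gT) d) /\
  (forall m : nat,
      #|components (orbit_vertices phi G B) (@commuting_adj gT)| = m ->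
      #|components (orbit_vertices phi G A) (@commuting_adj gT)| <= m).
Proof.
move=> _ sBA.
have onto := coarse_orbit_vertices G phi sBA.
have adj := coarse_orbit_adj (G := G) (phi := phi) sBA.
split=> [d [dB _] | m <-].
  have dA := contract_diam_le onto adj dB.
  by split; first exact: diam_le_connected dA.
exact: card_components_contract onto adj.
Qed.
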